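(* Let $G\le\mathcal{S}_n$ and $a\in\mathcal{T}_n\setminus\mathcal{S}_n$, where the kernel of $a$ has type $\lambda$, and suppose $(a,G)$ is an $\mathcal{S}_n$-pair. Then (1) $G$ is $\operatorname{rank}(a)$-homogeneous; and (2) $G$ is $\lambda$-homogeneous.
   Context: $\Omega=\{1,\ldots,n\}$, $\mathcal{T}_n$ is the monoid of all maps $\Omega\to\Omega$, $\mathcal{S}_n$ the symmetric group. $\operatorname{rank}(a)=|\Omega a|$; the kernel of $a$ is the partition of $\Omega$ into the classes of $\{(x,y):xa=ya\}$, and its type is the non-increasing list of class sizes. $(a,G)$ is an $\mathcal{S}_n$-pair if $\langle a,G\rangle\setminus G=\langle a,\mathcal{S}_n\rangle\setminus\mathcal{S}_n$. $G$ is $k$-homogeneous if transitive on $k$-subsets of $\Omega$. For a partition $\lambda$ of $n$, $G$ is $\lambda$-homogeneous if for any two ordered partitions $(A_1,A_2,\ldots)$, $(B_1,B_2,\ldots)$ of $\Omega$ with $|A_i|=|B_i|=\lambda_i$ there is $g\in G$ mapping the set of parts $\{A_1,A_2,\ldots\}$ onto $\{B_1,B_2,\ldots\}$. *)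

From mathcomp Require Import all_boot all_fingroup.
Set Implicit Arguments. Unset Strict Implicit. Unset Printing Implicit Defensive.

(* Omega = 'I_n ; T_n = {ffun 'I_n -> 'I_n} ; S_n = {perm 'I_n}.
   Maps act on the right as in the paper: x (f g) = (x f) g. *)
Definition trans (n : nat) := {ffun 'I_n -> 'I_n}.

Definition ptr n (g : {perm 'I_n}) : trans n := [ffun x => g x].

Definition tcomp n (f g : trans n) : trans n := [ffun x => g (f x)].

Inductive gen n (X : trans n -> Prop) : trans n -> Prop :=
| gen_base x : X x -> gen X x
| gen_mul x y : gen X x -> gen X y -> gen X (tcomp x y).

Definition in_grp n (G : {set {perm 'I_n}}) (t : trans n) : Prop :=
  exists2 g, g \in G & t = ptr g.

Definition gens n (a : trans n) (G : {set {perm 'I_n}}) (t : trans n) : Prop :=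
  t = a \/ in_grp G t.

Definition Sn_pair n (a : trans n) (G : {set {perm 'I_n}}) : Prop :=
  forall t : trans n,
    (gen (gens a G) t /\ ~ in_grp G t) <->
    (gen (gens a [set: {perm 'I_n}]) t /\ ~ in_grp [set: {perm 'I_n}] t).

Definition rank n (a : trans n) : nat := #|[set a x | x in 'I_n]|.

Definition kernel n (a : trans n) : {set {set 'I_n}} := preim_partition a [set: 'I_n].
Definition ker_type n (a : trans n) : seq nat :=
  sort geq (map (fun B : {set 'I_n} => #|B|) (enum (kernel a))).

Definition k_homogeneous n (G : {set {perm 'I_n}}) (k : nat) : Prop :=
  forall A B : {set 'I_n}, #|A| = k -> #|B| = k ->
    exists2 g, g \in G & [set g x | x in A] = B.

Definition ord_partition n (lam : seq nat) (P : seq {set 'I_n}) : Prop :=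
  [/\ uniq P, partition [set:: P] [set: 'I_n] & map (fun A : {set 'I_n} => #|A|) P = lam].

Definition lam_homogeneous n (G : {set {perm 'I_n}}) (lam : seq nat) : Prop :=
  forall P Q : seq {set 'I_n}, ord_partition lam P -> ord_partition lam Q ->
    exists2 g, g \in G &
      [set [set g x | x in A] | A : {set 'I_n} in [set:: P]] = [set:: Q].

From mathcomp Require Import all_boot all_fingroup.
Set Implicit Arguments. Unset Strict Implicit. Unset Printing Implicit Defensive.

(* An element of <a, G> outside G contains a factor a, preceded and followed by
   elements of G; so its image lies in some v(Im a) and its kernel is coarser
   than that of x |-> a (v x), with v in G.  As (a, G) is an S_n-pair, the
   non-permutations a g and g^-1 a (g in S_n) lie in <a, G>.  Taking g to move
   Im a onto a given set of size rank a, resp. the kernel of a onto a given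
   partition of its type, a cardinality comparison shows that some v in G
   already does so; hence G acts transitively on such sets and partitions. *)

Local Open Scope group_scope.

Section PermSets.
Variable T : finType.

Lemma imset_permM (p q : {perm T}) (X : {set T}) : (p * q) @: X = q @: (p @: X).
Proof. exact: actM 'P^* X p q. Qed.

Lemma mem_perm_imset (h : {perm T}) (X : {set T}) z : (z \in h @: X) = (h^-1 z \in X).
Proof. by rewrite -{1}(permKV h z) mem_imset //; exact: perm_inj. Qed.

Lemma exists_perm_imset (X Y : {set T}) : #|X| = #|Y| ->
  exists h : {perm T}, h @: X = Y /\ {in [predC X :|: Y], forall z, h z = z}.
Proof.
move: {2}#|X :\: Y| (erefl #|X :\: Y|) => k.
elim: k X => [|k IH] X XYk cardXY.
  have -> : X = Y.
    by apply/eqP; rewrite eqEcard cardXY leqnn andbT -setD_eq0 -cards_eq0 XYk.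
  by exists 1; split=> [|z _]; rewrite ?imset_perm1 ?perm1.
have cardYX : #|Y :\: X| = k.+1.
  by have := cardsID X Y; rewrite setIC -cardXY -(cardsID Y X) XYk => /addnI.
have /set0Pn [x] : X :\: Y != set0 by rewrite -cards_eq0 XYk.
have /set0Pn [y] : Y :\: X != set0 by rewrite -cards_eq0 cardYX.
rewrite !inE => /andP [yX yY] /andP [xY xX].
pose X' := tperm x y @: X.
have X'E z : (z \in X') = (tperm x y z \in X) by rewrite mem_perm_imset tpermV.
have X'Yk : #|X' :\: Y| = k.
  have -> : X' :\: Y = (X :\: Y) :\ x.
    apply/setP => z; rewrite !inE X'E.
    by case: tpermP => [->|->|/eqP-> _]; rewrite ?eqxx ?(negbTE yX) ?yY /= ?andbF // andbC.
  by move: XYk; rewrite (cardsD1 x) !inE xY xX => -[].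
have cardX'Y : #|X'| = #|Y| by rewrite card_imset ?cardXY //; exact: perm_inj.
have [h' [h'X' h'fix]] := IH X' X'Yk cardX'Y.
exists (tperm x y * h'); split=> [|z]; first by rewrite imset_permM.
rewrite !inE negb_or => /andP [zX zY].
have xz : x != z by apply: contraNneq zX => <-.
have yz : y != z by apply: contraNneq zY => <-.
by rewrite permM tpermD // h'fix // !inE negb_or X'E tpermD ?zX.
Qed.

Let disjointb : rel {set T} := fun A B => [disjoint A & B].

Lemma exists_perm_map_disjoint (s1 s2 : seq {set T}) :
  pairwise disjointb s1 -> pairwise disjointb s2 ->
  [seq #|A| | A : {set T} <- s1] = [seq #|A| | A : {set T} <- s2] ->
  exists h : {perm T}, [seq h @: A | A : {set T} <- s1] = s2.
Proof.
elim: s1 s2 => [|A s1 IH] [|B s2] //=; first by exists 1.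
move=> /andP [dA ds1] /andP [dB ds2] [cardAB cards12].
have [h' h's1] := IH s2 ds1 ds2 cards12.
have [k [kA kfix]] := exists_perm_imset (etrans (card_imset A (@perm_inj _ h')) cardAB).
exists (h' * k); congr (_ :: _); first by rewrite imset_permM.
rewrite -h's1; apply/eq_in_map => C s1C /=.
have h'Cs2 : h' @: C \in s2 by rewrite -h's1; apply: map_f.
have dh'AC : [disjoint h' @: A & h' @: C].
  rewrite -setI_eq0 -imsetI ?imset_eq0 ?setI_eq0; first exact: (allP dA).
  by move=> ? ? _ _; exact: perm_inj.
rewrite imset_permM -[RHS]imset_id; apply: eq_in_imset => z h'Cz.
by rewrite kfix // !inE negb_or (disjointFl dh'AC h'Cz) (disjointFl (allP dB _ h'Cs2) h'Cz).
Qed.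

Lemma pairwise_disjoint_trivIset (s : seq {set T}) :
  uniq s -> trivIset [set:: s] -> pairwise disjointb s.
Proof.
rewrite uniq_pairwise => us /trivIsetP tis.
apply: (sub_in_pairwise (P := mem s)) us; last exact/allP.
by move=> A B sA sB; apply: tis; rewrite inE.
Qed.

Lemma exists_perm_setact_partition (K : {set {set T}}) (s : seq {set T}) :
  trivIset K -> uniq s -> trivIset [set:: s] ->
  sort geq [seq #|B| | B : {set T} <- enum K] = [seq #|B| | B : {set T} <- s] ->
  exists h : {perm T}, ('P^*^*)%act K h = [set:: s].
Proof.
move=> tiK us tis cardsKs.
pose sK := sort (relpre (fun B : {set T} => #|B|) geq) (enum K).
have sKE : [set:: sK] = K by apply/setP => B; rewrite inE mem_sort mem_enum.
have usK : uniq sK by rewrite sort_uniq enum_uniq.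
have [||h hsK] := exists_perm_map_disjoint (pairwise_disjoint_trivIset usK _)
                    (pairwise_disjoint_trivIset us tis).
- by rewrite sKE.
- by rewrite -cardsKs sort_map.
exists h; rewrite -hsK -sKE; apply/setP => C; rewrite inE.
by apply/imsetP/mapP => -[B]; rewrite ?inE => sB ->; exists B; rewrite ?inE.
Qed.

End PermSets.

Section Kernels.
Variables (T U : finType) (f : T -> U).

(* [g x |-> f x] maps the image of [g] onto that of [f]; equal sizes make it injective. *)
Lemma eq_ker_of_refine (g : T -> U) :
  (forall x y, g x = g y -> f x = f y) -> #|f @: [set: T]| = #|g @: [set: T]| ->
  forall x y, f x = f y -> g x = g y.
Proof.
move=> refine_gf card_fg.
pose phi u := oapp f u [pick x | g x == u].
have phiE x : phi (g x) = f x.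
  by rewrite /phi; case: pickP => [x' /eqP/refine_gf | /(_ x)] //; rewrite eqxx.
have phi_img : phi @: (g @: [set: T]) = f @: [set: T].
  by rewrite -imset_comp; apply: eq_imset => x; rewrite /= phiE.
have /imset_injP phi_inj : #|phi @: (g @: [set: T])| == #|g @: [set: T]|.
  by rewrite phi_img card_fg.
by move=> x y fxy; apply: phi_inj; rewrite ?imset_f ?inE ?phiE.
Qed.

Lemma preim_partition_setact (m : {perm T}) :
  (forall x y, f (m x) = f (m y) -> f x = f y) ->
  ('P^*^*)%act (preim_partition f [set: T]) m = preim_partition f [set: T].
Proof.
move=> fm_refine.
have m_onto : m @: [set: T] = [set: T].
  by apply/eqP; rewrite eqEcard subsetT card_imset ?leqnn //; exact: perm_inj.
have fm_img : #|f @: [set: T]| = #|(f \o m) @: [set: T]|.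
  by rewrite imset_comp m_onto.
have fmE x y : (f (m x) == f (m y)) = (f x == f y).
  apply/idP/idP => /eqP;
    by [move/fm_refine=> -> | move/(eq_ker_of_refine fm_refine fm_img)=> ->].
have classE x : ('P^*)%act [set y in [set: T] | f x == f y] m
                = [set y in [set: T] | f (m x) == f y].
  by apply/setP => y; rewrite mem_perm_imset !inE -{2}(permKV m y) fmE.
rewrite /preim_partition /equivalence_partition.
apply/setP => B; apply/imsetP/imsetP => [[_ /imsetP [x _ ->] ->] | [x _ ->]].
  by exists (m x); rewrite ?classE.
exists [set y in [set: T] | f (m^-1 x) == f y]; first exact: imset_f.
by rewrite classE permKV.
Qed.

End Kernels.

Lemma act_transitive_of_orbit (aT : finGroupType) (rT : finType)
    (to : {action aT &-> rT}) (G : {group aT}) (x0 : rT)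
    (I : Type) (F : I -> rT) (P : I -> Prop) :
  (forall i, P i -> F i \in orbit to G x0) ->
  forall i j, P i -> P j -> exists2 g, g \in G & to (F i) g = F j.
Proof.
move=> orbit_x0 i j Pi Pj; apply/orbitP.
by apply: orbit_trans (orbit_x0 j Pj) _; rewrite orbit_sym; exact: orbit_x0.
Qed.

Section Semigroup.
Variables (n : nat) (G : {group {perm 'I_n}}) (a : trans n).

Lemma in_grp_setTP t : in_grp [set: {perm 'I_n}] t <-> injective t.
Proof.
split=> [[g _ ->] x y | t_inj]; first by rewrite !ffunE; exact: perm_inj.
by exists (perm t_inj); rewrite ?inE //; apply/ffunP => x; rewrite ffunE permE.
Qed.

Lemma gen_image t : gen (gens a G) t ->
  in_grp G t \/ exists2 v, v \in G & forall x, exists y, t x = v (a y).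
Proof.
elim=> [s [->|Gs] | x y _ IHx _ IHy]; last case: IHy => [[g Gg ->]|[v Gv imy]].
- by right; exists 1 => // x; exists x; rewrite perm1.
- by left.
- case: IHx => [[g' Gg' ->]|[v Gv imx]].
    left; exists (g' * g); rewrite ?groupM //.
    by apply/ffunP => z; rewrite !ffunE permM.
  right; exists (v * g); rewrite ?groupM // => z.
  by rewrite !ffunE; have [w ->] := imx z; exists w; rewrite permM.
- by right; exists v => // z; rewrite ffunE.
Qed.

Lemma gen_kernel t : gen (gens a G) t ->
  in_grp G t \/ exists2 v, v \in G & forall x y, a (v x) = a (v y) -> t x = t y.
Proof.
elim=> [s [->|Gs] | x y _ IHx _ IHy]; last case: IHx => [[g Gg ->]|[v Gv kerx]].
- by right; exists 1 => // x y; rewrite !perm1.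
- by left.
- case: IHy => [[g' Gg' ->]|[v Gv kery]].
    left; exists (g * g'); rewrite ?groupM //.
    by apply/ffunP => z; rewrite !ffunE permM.
  right; exists (g * v); rewrite ?groupM // => z w azw.
  by rewrite !ffunE; apply: kery; rewrite -!permM.
- by right; exists v => // z w /kerx; rewrite !ffunE => ->.
Qed.

Hypothesis a_nonperm : ~ in_grp [set: {perm 'I_n}] a.
Hypothesis pairG : Sn_pair a G.

Lemma gen_noninj t : gen (gens a [set: {perm 'I_n}]) t -> ~ injective t ->
  gen (gens a G) t /\ ~ in_grp G t.
Proof. by move=> gent t_noninj; apply/pairG; split=> [//|/in_grp_setTP]. Qed.

Lemma image_in_orbit (C : {set 'I_n}) : #|C| = rank a ->
  C \in orbit 'P^* G [set a x | x in 'I_n].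
Proof.
move=> cardC; have [g [gIm _]] := exists_perm_imset (esym cardC).
set t := tcomp a (ptr g).
have [/gen_image [//|[v Gv tv]] _] : gen (gens a G) t /\ ~ in_grp G t.
  apply: gen_noninj => [|t_inj].
    by apply: gen_mul; apply: gen_base; [left | right; exists g; rewrite ?inE].
  by apply: a_nonperm; apply/in_grp_setTP => x y axy; apply: t_inj; rewrite !ffunE axy.
apply/orbitP; exists v => //; apply/esym/eqP.
rewrite eqEcard card_imset ?cardC ?leqnn ?andbT; last exact: perm_inj.
apply/subsetP => z; rewrite -gIm => /imsetP [_ /imsetP [x _ ->] ->].
have [y] := tv x; rewrite !ffunE => ->.
by apply: imset_f; exact: imset_f.
Qed.

Lemma partition_in_orbit (P : seq {set 'I_n}) : ord_partition (ker_type a) P ->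
  [set:: P] \in orbit ('P^*^*) G (kernel a).
Proof.
case=> uP /and3P [_ tiP _] cardsP.
have [|h hK] := exists_perm_setact_partition _ uP tiP (esym cardsP).
  by have /and3P [] := preim_partitionP a [set: 'I_n].
set t := tcomp (ptr h^-1) a.
have [/gen_kernel [//|[v Gv tv]] _] : gen (gens a G) t /\ ~ in_grp G t.
  apply: gen_noninj => [|t_inj].
    by apply: gen_mul; apply: gen_base; [right; exists h^-1; rewrite ?inE | left].
  apply: a_nonperm; apply/in_grp_setTP => x y axy.
  by apply: (@perm_inj _ h); apply: t_inj; rewrite !ffunE !permK axy.
have hv_refine x y : a ((h * v) x) = a ((h * v) y) -> a x = a y.
  by rewrite !permM => /tv; rewrite !ffunE !permK.
apply/orbitP; exists v^-1; rewrite ?groupV //.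
by rewrite -hK /kernel -{1}(preim_partition_setact hv_refine) -!actM mulgK.
Qed.

End Semigroup.

Theorem lemma5p1 (n : nat) (G : {group {perm 'I_n}}) (a : trans n) :
  ~ in_grp [set: {perm 'I_n}] a ->
  Sn_pair a G ->
  k_homogeneous G (rank a) /\ lam_homogeneous G (ker_type a).
Proof.
move=> a_nonperm pairG; split.
- move=> A B cardA cardB.
  exact: (act_transitive_of_orbit (F := id) (image_in_orbit a_nonperm pairG) cardA cardB).
- move=> P Q partP partQ.
  exact: (act_transitive_of_orbit (partition_in_orbit a_nonperm pairG) partP partQ).
Qed.
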